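(* For every integer $k\ge 2$ and every positive integer $n$, \[ t_{2k}(n)\le \frac{2k-3}{3}\,\mathrm{ex}(n, C_{2k}). \]
   Context: All graphs are simple. For a graph $G$, $t(G)$ denotes the number of triangles of $G$. A graph is $F$-free if it contains no (not necessarily induced) subgraph isomorphic to $F$. For $\ell\ge 3$, $t_\ell(n)$ is the maximum of $t(G)$ over all $C_\ell$-free graphs on $n$ vertices, $C_\ell$ being the cycle of length $\ell$. $\mathrm{ex}(n,F)$ is the maximum number of edges of an $F$-free graph on $n$ vertices. *)

From HB Require Import structures.
From mathcomp Require Import all_boot all_order all_algebra.
Set Implicit Arguments. Unset Strict Implicit. Unset Printing Implicit Defensive.

Definition simple_graph (n : nat) (A : {set 'I_n * 'I_n}) : bool :=
  [forall x : 'I_n, (x, x) \notin A] &&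
  [forall x : 'I_n, forall y : 'I_n, ((x, y) \in A) == ((y, x) \in A)].

Definition adj (n : nat) (A : {set 'I_n * 'I_n}) : rel 'I_n :=
  fun x y => (x, y) \in A.

Definition edges (n : nat) (A : {set 'I_n * 'I_n}) : {set {set 'I_n}} :=
  [set e : {set 'I_n} | [exists x : 'I_n, exists y : 'I_n,
      [&& x != y, e == [set x; y] & adj A x y]]].

Definition nedges (n : nat) (A : {set 'I_n * 'I_n}) : nat := #|edges A|.

Definition ntriangles (n : nat) (A : {set 'I_n * 'I_n}) : nat :=
  #|[set T : {set 'I_n} | (#|T| == 3) &&
      [forall x in T, forall y in T, (x != y) ==> adj A x y]]|.

(* G contains C_l as a (not necessarily induced) subgraph: there are l
   distinct vertices v_0,...,v_{l-1} with v_i ~ v_{i+1} and v_{l-1} ~ v_0. *)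
Definition has_cycle (n l : nat) (A : {set 'I_n * 'I_n}) : bool :=
  [exists s : l.-tuple 'I_n, uniq s && cycle (adj A) s].

Definition C_free (n l : nat) (A : {set 'I_n * 'I_n}) : bool :=
  ~~ has_cycle l A.

Definition ex_cycle (n l : nat) : nat :=
  \max_(A : {set 'I_n * 'I_n} | simple_graph A && C_free l A) nedges A.

Definition t_cycle (l n : nat) : nat :=
  \max_(A : {set 'I_n * 'I_n} | simple_graph A && C_free l A) ntriangles A.

From HB Require Import structures.
From mathcomp Require Import all_boot all_order all_algebra.
From mathcomp Require Import zify.
Import Order.TTheory GRing.Theory Num.Theory.
Set Implicit Arguments. Unset Strict Implicit. Unset Printing Implicit Defensive.

(* The triangles through a vertex [v] are the edges of the subgraph induced on
   its neighbourhood [N(v)].  A path on [2k - 1] vertices in [N(v)] would close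
   through [v] into a [C_2k], so by the Erdos-Gallai theorem [N(v)] spans at
   most [(2k - 3) d(v) / 2] edges.  Summing over [v] counts every triangle three
   times and gives [3 t(G) <= (2k - 3) e(G)]. *)

Lemma sum_nat_card (T : finType) (P : pred T) :
  \sum_x (P x : nat) = #|[set x | P x]|.
Proof.
by rewrite -sum1dep_card [RHS]big_mkcond; apply: eq_bigr => x _; case: (P x).
Qed.

Lemma sum_nat_card_in (T : finType) (B : {set T}) (P : pred T) :
  \sum_(x in B) (P x : nat) = #|[set x in B | P x]|.
Proof.
rewrite big_mkcond -sum_nat_card; apply: eq_bigr => x _; by case: (x \in B).
Qed.

Lemma sum_ordered_pairs (T : finType) (B : {set T}) :
  \sum_x \sum_y ((x \in B) && (y \in B) && (x != y) : nat) = #|B| * #|B|.-1.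
Proof.
rewrite -sum_nat_const [RHS]big_mkcond; apply: eq_bigr => x _.
case: ifP => xB; last by rewrite big1.
rewrite sum_nat_card (cardsD1 x B) xB add1n /=.
by apply: eq_card => y; rewrite !inE andbC eq_sym.
Qed.

Section ErdosGallai.
Variables (T : finType) (e : rel T).
Hypotheses (e_sym : symmetric e) (e_irr : irreflexive e).

Definition nbhd (x : T) (S : {set T}) : {set T} := [set y in S | e x y].

Definition degsum (S : {set T}) : nat := \sum_(x in S) #|nbhd x S|.

Definition spath (S : {set T}) (s : seq T) : bool :=
  [&& uniq s, all (fun x => x \in S) s & sorted e s].

Lemma spath_take (S : {set T}) n s : spath S s -> spath S (take n s).
Proof.
case/and3P=> us sS es; apply/and3P; split; first exact: take_uniq.
  by apply/allP => x /mem_take; apply: (allP sS).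
case: s {us sS} es => [|a t] //=; case: n => [|n] //=.
by rewrite -{1}(cat_take_drop n t) cat_path => /andP[].
Qed.

Lemma spath_sub (S S' : {set T}) s : S \subset S' -> spath S s -> spath S' s.
Proof.
move=> sub /and3P[us sS es]; apply/and3P; split => //.
by apply/allP => x /(allP sS) /(subsetP sub).
Qed.

Lemma degsum_setD1 v (S : {set T}) :
  v \in S -> degsum S = degsum (S :\ v) + 2 * #|nbhd v S|.
Proof.
move=> vS; rewrite /degsum (big_setD1 _ vS) /=.
rewrite (eq_bigr (fun x => e x v + #|nbhd x (S :\ v)|)); last first.
  move=> x; rewrite !inE => /andP[xv _]; rewrite (cardsD1 v) !inE vS.
  by congr (_ + _); apply: eq_card => y; rewrite !inE andbA.
rewrite big_split /= sum_nat_card_in.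
have -> : [set x in S :\ v | e x v] = nbhd v S.
  apply/setP => y; rewrite !inE e_sym.
  by case: eqP => [->|_]; rewrite ?e_irr ?andbF ?andbT.
lia.
Qed.

Lemma degsum_split (C S : {set T}) : C \subset S ->
  (forall x y, x \in C -> y \in S -> e x y -> y \in C) ->
  degsum S = degsum C + degsum (S :\: C).
Proof.
move=> CS closedC; rewrite /degsum (big_setID C) /= (setIidPr CS).
congr (_ + _); apply: eq_bigr => x xC; apply: eq_card => y; rewrite !inE.
  case exy: (e x y); rewrite ?andbF ?andbT //.
  by apply/idP/idP => [yS|/(subsetP CS)//]; exact: closedC xC yS exy.
case exy: (e x y); rewrite ?andbF ?andbT //.
case yC: (y \in C) => //=; move: xC; rewrite inE => /andP[/negP xC xS].
by case: xC; apply: closedC yC xS _; rewrite e_sym.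
Qed.

Lemma degsum_le (S : {set T}) m :
  (forall x, x \in S -> #|nbhd x S| <= m) -> degsum S <= m * #|S|.
Proof.
move=> hm; rewrite /degsum -sum1_card big_distrr /= muln1.
exact: leq_sum.
Qed.

Lemma spath_cons (S : {set T}) w a t : spath S (a :: t) ->
  w \in S -> w \notin a :: t -> e w a -> spath S (w :: a :: t).
Proof.
case/and3P=> us sS es wS ws ewa; apply/and3P; split.
- by rewrite cons_uniq ws us.
- by rewrite /= wS.
- by rewrite /= ewa; exact: es.
Qed.

Lemma spath_rcons (S : {set T}) a t w : spath S (a :: t) ->
  w \in S -> w \notin a :: t -> e (last a t) w -> spath S (rcons (a :: t) w).
Proof.
case/and3P=> us sS es wS ws ebw; apply/and3P; split.
- by rewrite rcons_uniq ws us.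
- by rewrite all_rcons wS.
- by rewrite /= rcons_path ebw andbT.
Qed.

Section LongestPath.
Variables (S : {set T}) (a : T) (t : seq T).
Hypothesis a_t_spath : spath S (a :: t).
Hypothesis a_t_longest : forall s, spath S s -> size s <= (size t).+1.

Lemma nbhd_head_longest : {subset nbhd a S <= a :: t}.
Proof.
move=> w; rewrite inE => /andP[wS eaw]; apply/negPn/negP => wt.
have := a_t_longest (spath_cons a_t_spath wS wt _); rewrite e_sym eaw.
by rewrite /= ltnn => /(_ isT).
Qed.

Lemma nbhd_last_longest : {subset nbhd (last a t) S <= a :: t}.
Proof.
move=> w; rewrite inE => /andP[wS ebw]; apply/negPn/negP => wt.
have := a_t_longest (spath_rcons a_t_spath wS wt ebw).
by rewrite size_rcons ltnn.
Qed.

End LongestPath.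

Lemma card_nbhd_le_count x (S : {set T}) s :
  uniq s -> {subset nbhd x S <= s} -> #|nbhd x S| <= count (e x) s.
Proof.
move=> us sub; rewrite -size_filter; have /card_uniqP <- := filter_uniq (e x) us.
apply: subset_leq_card; apply/subsetP => y yN.
by rewrite mem_filter sub // andbT; move: yN; rewrite inE => /andP[].
Qed.

Lemma count_adj_head a t :
  count (e a) (a :: t) = count (fun i => e a (nth a t i)) (iota 0 (size t)).
Proof. by rewrite /= e_irr add0n -{1}(mkseq_nth a t) count_map. Qed.

Lemma count_adj_last a t : count (e (last a t)) (a :: t) =
  count (fun i => e (last a t) (nth a (a :: t) i)) (iota 0 (size t)).
Proof.
rewrite [a :: t]lastI -(size_belast a t); set b := last a t; set u := belast a t.
have -> : count (e b) (rcons u b) = count (e b) u.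
  by rewrite -cats1 count_cat /= e_irr !addn0.
rewrite -{1}(mkseq_nth a u) count_map.
by apply: eq_in_count => i; rewrite mem_iota nth_rcons => /andP[_ ->].
Qed.

(* Pigeonhole: the neighbours of the two ends of a path are too many to
   avoid a crossing pair of chords [a ~ s_(i+1)], [s_i ~ b]. *)
Lemma chord_crossing a t :
  (size t).+1 <= count (e a) (a :: t) + count (e (last a t)) (a :: t) ->
  exists2 i, i < size t & e a (nth a t i) && e (last a t) (nth a (a :: t) i).
Proof.
rewrite count_adj_head count_adj_last -count_predUI => hcount.
have := count_size (predU (fun i => e a (nth a t i))
  (fun i => e (last a t) (nth a (a :: t) i))) (iota 0 (size t)).
rewrite size_iota => hU.
have : has (predI (fun i => e a (nth a t i))
  (fun i => e (last a t) (nth a (a :: t) i))) (iota 0 (size t)).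
  by rewrite has_count; lia.
by case/hasP => i; rewrite mem_iota => /andP[_ hi] hi'; exists i.
Qed.

Lemma cycle_cat_rev x0 s1 s2 : s1 != [::] -> s2 != [::] ->
  sorted e (s1 ++ s2) -> e (head x0 s1) (head x0 s2) ->
  e (last x0 s1) (last x0 s2) -> cycle e (s1 ++ rev s2).
Proof.
case: s1 => [|a t1] // _; case: s2 => [|c t2] // _ /=.
rewrite cat_path => /andP[p1 /= /andP[_ p2]] hac hl.
rewrite rcons_path cat_path last_cat p1 /= rev_cons last_rcons e_sym hac andbT.
rewrite -rev_cons (lastI c t2) rev_rcons /= hl rev_path.
by rewrite (@eq_path _ _ e) // => u w; rewrite e_sym.
Qed.

Lemma cycle_extend_spath (S : {set T}) c z y :
  cycle e c -> uniq c -> all (fun x => x \in S) c ->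
  z \in c -> y \in S -> y \notin c -> e y z ->
  exists2 s, spath S s & size s = (size c).+1.
Proof.
move=> cyc uc cS zc yS yc eyz; exists (y :: rot (index z c) c); last first.
  by rewrite /= size_rot.
have hr : rot (index z c) c = z :: (drop (index z c).+1 c ++ take (index z c) c).
  by rewrite /rot (drop_nth z) ?index_mem // nth_index.
apply/and3P; split.
- by rewrite cons_uniq mem_rot yc rot_uniq.
- by rewrite /= yS; apply/allP => x; rewrite mem_rot; exact: (allP cS).
- move: cyc; rewrite -(rot_cycle (index z c)) hr /= rcons_path eyz.
  by case/andP.
Qed.

(* If every vertex of [S] has degree at least [m/2] and a longest path has at
   most [m] vertices, its ends carry crossing chords, giving a cycle through
   all its vertices; a neighbour outside would then extend it to a longer
   path. *)
Lemma longest_spath_closed (S : {set T}) m a t :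
  (forall v, v \in S -> m <= 2 * #|nbhd v S|) ->
  spath S (a :: t) -> (size t).+1 <= m ->
  (forall s, spath S s -> size s <= (size t).+1) ->
  forall z y, z \in a :: t -> y \in S -> e z y -> y \in a :: t.
Proof.
move=> hdeg sp sm smax z y zs yS ezy; apply/negPn/negP => ys.
have /and3P[us sS es] := sp.
have aS : a \in S by apply: (allP sS); exact: mem_head.
have bS : last a t \in S by apply: (allP sS); exact: mem_last.
have [i it /andP[ea eb]] : exists2 i, i < size t &
    e a (nth a t i) && e (last a t) (nth a (a :: t) i).
  apply: chord_crossing.
  have := card_nbhd_le_count us (nbhd_head_longest sp smax).
  have := card_nbhd_le_count us (nbhd_last_longest sp smax).
  have := hdeg a aS; have := hdeg _ bS; lia.
set s1 := take i.+1 (a :: t); set s2 := drop i.+1 (a :: t).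
have s12 : s1 ++ s2 = a :: t by rewrite cat_take_drop.
have s2_neq_nil : s2 != [::] by rewrite -size_eq0 size_drop /=; lia.
have cyc : cycle e (s1 ++ rev s2).
  apply: (cycle_cat_rev (x0 := a)) => //; first by rewrite s12.
    by rewrite /s2 /= -nth0 nth_drop addn0.
  rewrite -nth_last size_takel /= ?ltnS 1?ltnW // nth_take // e_sym.
  have : last a (s1 ++ s2) = last a t by rewrite s12.
  by rewrite last_cat; case: (s2) s2_neq_nil => [|c t2] //= _ ->.
have hperm : perm_eq (s1 ++ rev s2) (a :: t).
  by rewrite -[X in perm_eq _ X]s12 perm_cat2l perm_rev.
have [s' sp' sz'] : exists2 s', spath S s' & size s' = (size (s1 ++ rev s2)).+1.
  apply: (cycle_extend_spath (z := z)) cyc _ _ _ yS _ _.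
  - by rewrite (perm_uniq hperm).
  - by rewrite (perm_all _ hperm).
  - by rewrite (perm_mem hperm).
  - by rewrite (perm_mem hperm).
  - by rewrite e_sym.
by have := smax _ sp'; rewrite sz' (perm_size hperm) ltnn.
Qed.

Lemma exists_longest_spath (S : {set T}) l a : a \in S ->
  (forall s, spath S s -> size s < l) ->
  exists b t, spath S (b :: t) /\ forall s, spath S s -> size s <= (size t).+1.
Proof.
move=> aS hl.
pose P m := [exists s : m.-tuple T, spath S s].
have spa : spath S [:: a] by rewrite /spath /= aS.
have P1 : P 1 by apply/existsP; exists [tuple a].
have Pl m : P m -> m <= l by case/existsP => s /hl; rewrite size_tuple => /ltnW.
case: (ex_maxnP (ex_intro _ 1 P1) Pl) => m /existsP[s sp] maxm.
have longest s' : spath S s' -> size s' <= size s.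
  by move=> sp'; rewrite size_tuple; apply: maxm; apply/existsP; exists (in_tuple s').
case: s sp longest => -[|b t] /= sz sp longest.
  by have := longest _ spa.
by exists b, t.
Qed.

(* Either a vertex of small degree can be deleted, or
   all degrees are at least [(l - 1) / 2] and the vertices of a longest path
   form a connected component of at most [l - 1] vertices. *)
Theorem erdos_gallai_degsum l (S : {set T}) : 2 <= l ->
  (forall s, spath S s -> size s < l) -> degsum S <= (l - 2) * #|S|.
Proof.
move=> l2; have [N] := ubnP #|S|; elim: N S => // N IH S /ltnSE hN hl.
case: (boolP [exists v in S, 2 * #|nbhd v S| <= l - 2]).
  case/exists_inP => v vS hv; rewrite (degsum_setD1 vS) (cardsD1 v S) vS.
  have hSv : #|S :\ v| < N by rewrite (cardsD1 v S) vS in hN.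
  have := IH _ hSv (fun s sp => hl s (spath_sub (subD1set S v) sp)); lia.
move/exists_inPn => hdeg.
have {}hdeg v : v \in S -> l.-1 <= 2 * #|nbhd v S|.
  by move=> /hdeg; rewrite -ltnNge; lia.
case: (set_0Vmem S) => [->|[a aS]]; first by rewrite /degsum big_set0.
have [b [t [sp longest]]] := exists_longest_spath aS hl.
have tl : (size t).+1 <= l.-1 by have := hl _ sp; rewrite /=; lia.
pose C := [set x in b :: t].
have CS : C \subset S.
  by apply/subsetP => x; rewrite in_set; case/and3P: sp => _ /allP sS _; exact: sS.
have closedC x y : x \in C -> y \in S -> e x y -> y \in C.
  by rewrite !inE; exact: longest_spath_closed hdeg sp tl longest x y.
have cardC : #|C| = (size t).+1.
  by rewrite cardsE; apply/card_uniqP; case/and3P: sp.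
have hC : degsum C <= (l - 2) * #|C|.
  apply: degsum_le => x xC; apply: leq_trans (_ : #|C :\ x| <= _).
    apply: subset_leq_card; apply/subsetP => y; rewrite !inE => /andP[yC exy].
    by rewrite yC andbT; apply: contraTneq exy => ->; rewrite e_irr.
  by have := cardsD1 x C; rewrite xC cardC; lia.
have cardS := cardsID C S; rewrite (setIidPr CS) in cardS.
have hSC : #|S :\: C| < N by lia.
have hD := IH _ hSC (fun s sp => hl s (spath_sub (subsetDl S C) sp)).
by rewrite (degsum_split CS closedC); lia.
Qed.

End ErdosGallai.

Section Triangles.
Variables (n : nat) (A : {set 'I_n * 'I_n}).
Hypothesis A_simple : simple_graph A.

Lemma adj_sym : symmetric (adj A).
Proof.
move=> x y; case/andP: A_simple => _ /forallP /(_ x) /forallP /(_ y) /eqP.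
by rewrite /adj.
Qed.

Lemma adj_irr : irreflexive (adj A).
Proof. by move=> x; case/andP: A_simple => /forallP /(_ x) /negbTE. Qed.

Local Notation nbr x := (nbhd (adj A) x [set: 'I_n]).

Lemma in_nbr x y : (y \in nbr x) = adj A x y.
Proof. by rewrite !inE. Qed.

(* A path on [2k - 1] vertices inside the neighbourhood of [v] closes, through
   [v], into a cycle of length [2k]. *)
Lemma spath_nbr_lt k v s : 0 < k -> C_free (2 * k) A ->
  spath (adj A) (nbr v) s -> size s < (2 * k).-1.
Proof.
move=> k0 cfree sp; rewrite ltnNge; apply/negP => long.
set s' := take (2 * k).-1 s.
have /and3P[us' sN' es'] : spath (adj A) (nbr v) s' by exact: spath_take.
have sz' : size s' = (2 * k).-1 by rewrite size_takel.
have vs' : v \notin s' by apply/negP => /(allP sN'); rewrite in_nbr adj_irr.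
have sz : size (v :: s') == 2 * k by rewrite /= sz'; lia.
move/negP: cfree; apply; apply/existsP; exists (Tuple sz) => /=.
rewrite vs' us' /= rcons_path.
case: s' sz' sN' es' {us' vs' sz} => [|a t] /=; first by lia.
move=> _ /andP[av /allP tN] es; rewrite -in_nbr av es /= adj_sym -in_nbr.
by case: t tN {es} => [|b t] tN //=; apply: tN; exact: mem_last.
Qed.

Lemma degsum_nbr_le k v : 2 <= k -> C_free (2 * k) A ->
  degsum (adj A) (nbr v) <= (2 * k - 3) * #|nbr v|.
Proof.
move=> k2 cfree; have -> : 2 * k - 3 = (2 * k).-1 - 2 by lia.
apply: (erdos_gallai_degsum adj_sym adj_irr); first by lia.
by move=> s; apply: spath_nbr_lt => //; lia.
Qed.

Definition triangles : {set {set 'I_n}} :=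
  [set T : {set 'I_n} | (#|T| == 3) &&
    [forall x in T, forall y in T, (x != y) ==> adj A x y]].

Lemma triangle_adj T x y :
  T \in triangles -> x \in T -> y \in T -> x != y -> adj A x y.
Proof.
rewrite inE => /andP[_ /forall_inP hT] xT yT.
by move: (hT x xT) => /forall_inP /(_ y yT) /implyP.
Qed.

Lemma card_triangles_through x y :
  #|[set T in triangles | (x \in T) && (y \in T) && (x != y)]|
    <= adj A x y * #|nbhd (adj A) y (nbr x)|.
Proof.
case exy: (adj A x y); last first.
  rewrite mul0n leqn0 cards_eq0; apply/eqP/setP => T; rewrite in_set in_set0.
  apply/negP => /andP[TT /andP[/andP[xT yT] xy]].
  by move: (triangle_adj TT xT yT xy); rewrite exy.
rewrite mul1n; apply: leq_trans (leq_imset_card (fun z => [set x; y; z]) _).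
apply: subset_leq_card; apply/subsetP => T.
rewrite inE => /andP[TT /andP[/andP[xT yT] xy]].
have T3 : #|T| = 3 by move: TT; rewrite inE => /andP[/eqP].
have [z Txy] : exists z, T :\ x :\ y = [set z].
  apply/cards1P; have := cardsD1 x T; have := cardsD1 y (T :\ x).
  by rewrite !inE eq_sym xy xT yT T3; lia.
have : z \in T :\ x :\ y by rewrite Txy set11.
rewrite !inE => /andP[zy /andP[zx zT]].
apply/imsetP; exists z.
  by rewrite !inE !(triangle_adj TT) // eq_sym.
apply/setP => w; rewrite !inE.
case: (w =P x) => [->|/eqP wx] /=; first by rewrite xT.
case: (w =P y) => [->|/eqP wy] /=; first by rewrite yT.
apply/idP/idP => [wT|/eqP ->//].
have : w \in T :\ x :\ y by rewrite !inE wx wy wT.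
by rewrite Txy inE.
Qed.

(* Counting ordered pairs of distinct vertices in triangles: each triangle
   contributes [6], and the pairs [(x, y)] with [y ~ x] contribute at most the
   number of common neighbours of [x] and [y]. *)
Lemma triangles_le_degsum : 6 * #|triangles| <= \sum_x degsum (adj A) (nbr x).
Proof.
rewrite mulnC -sum_nat_const.
rewrite (eq_bigr (fun T : {set 'I_n} => \sum_x \sum_y
    ((x \in T) && (y \in T) && (x != y) : nat))); last first.
  by move=> T; rewrite sum_ordered_pairs inE => /andP[/eqP ->].
rewrite exchange_big /=; apply: leq_sum => x _.
rewrite exchange_big /= /degsum [X in _ <= X]big_mkcond /=; apply: leq_sum => y _.
rewrite sum_nat_card_in in_nbr; apply: leq_trans (card_triangles_through x y) _.
by case: (adj A x y); rewrite ?mul1n ?mul0n.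
Qed.

Lemma sum_card_nbr_le : \sum_x #|nbr x| <= 2 * nedges A.
Proof.
apply: (@leq_trans (\sum_x #|[set E in edges A | x \in E]|)).
  apply: leq_sum => x _.
  rewrite -(@card_in_imset _ _ (fun y => [set x; y])); last first.
    move=> y1 y2; rewrite !in_nbr => exy1 _ eq12.
    have : y1 \in [set x; y2] by rewrite -eq12 !inE eqxx orbT.
    by rewrite !inE => /orP[/eqP y1x|/eqP //]; move: exy1; rewrite y1x adj_irr.
  apply: subset_leq_card; apply/subsetP => E /imsetP[y]; rewrite in_nbr => exy ->.
  rewrite !inE eqxx andbT; apply/existsP; exists x; apply/existsP; exists y.
  by rewrite eqxx exy !andbT; apply: contraTneq exy => ->; rewrite adj_irr.
under eq_bigr do rewrite -sum_nat_card_in.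
rewrite exchange_big /= mulnC /nedges -sum_nat_const; apply: eq_leq.
apply: eq_bigr => E; rewrite inE => /existsP[a /existsP[b /and3P[ab /eqP -> _]]].
have := cards2 a b; rewrite ab => <-.
by rewrite sum_nat_card; apply: eq_card => z; rewrite inE.
Qed.

Lemma triangles_le_edges k : 2 <= k -> C_free (2 * k) A ->
  3 * ntriangles A <= (2 * k - 3) * nedges A.
Proof.
move=> k2 cfree; rewrite -(@leq_pmul2l 2) // mulnA mulnCA.
apply: leq_trans triangles_le_degsum _.
apply: leq_trans (_ : \sum_x (2 * k - 3) * #|nbr x| <= _).
  by apply: leq_sum => x _; apply: degsum_nbr_le.
by rewrite -big_distrr /= leq_mul2l sum_card_nbr_le orbT.
Qed.

End Triangles.

Local Open Scope ring_scope.

Lemma ler_nat_div_mul (R : numFieldType) (t a b d : nat) : (0 < d)%N ->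
  (t * d <= a * b)%N -> (t%:R : R) <= a%:R / d%:R * b%:R.
Proof.
by move=> d0 h; rewrite mulrAC ler_pdivlMr ?ltr0n // -!natrM ler_nat.
Qed.

Theorem theorem1 (k n : nat) (hk : (2 <= k)%N) (hn : (0 < n)%N) :
  ((t_cycle (2 * k) n)%:R : rat)
    <= ((2 * k - 3)%N%:R / 3%:R) * (ex_cycle n (2 * k))%:R.
Proof.
apply: ler_nat_div_mul => //; rewrite -leq_divRL //.
apply/bigmax_leqP => A /andP[A_simple cfree]; rewrite leq_divRL // mulnC.
apply: leq_trans (triangles_le_edges A_simple hk cfree) _.
by rewrite leq_mul2l (leq_bigmax_cond A) ?A_simple ?cfree ?orbT.
Qed.
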